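(* Let $G$ be a finite group with conjugacy classes $\mathcal{C}_1,\dots,\mathcal{C}_s$, and let $r\ge 2$ be a prime with $r\nmid |G|$. Let $g\in G\wr S_n$ have type $T(g)=(T(g)_{ij})_{s\times n}$. Then $g$ is an $r$-th power in $G\wr S_n$ if and only if $r\mid T(g)_{ij}$ whenever $r\mid j$.
   Context: $G\wr S_n$ is the set of pairs $(f,\pi)$ with $f:\{1,\dots,n\}\to G$ and $\pi\in S_n$, with product $(f,\pi)(f',\pi')=(ff'_\pi,\pi\pi')$, $f'_\pi(i)=f'(\pi^{-1}(i))$, pointwise product of functions. For $(f,\pi)$ and a cycle $(j,\pi(j),\dots,\pi^t(j))$ of $\pi$, its cycle product is $f(j)f(\pi^{-1}(j))\cdots f(\pi^{-t}(j))$; its conjugacy class is independent of the starting point. The type $T(g)$ of $g=(f,\pi)$ is the $s\times n$ matrix whose $(i,k)$ entry is the number of $k$-cycles of $\pi$ whose cycle product lies in $\mathcal{C}_i$. An element $g$ is an $r$-th power if $g=h^r$ for some $h\in G\wr S_n$. *)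

From mathcomp Require Import all_boot all_fingroup.
Set Implicit Arguments. Unset Strict Implicit. Unset Printing Implicit Defensive.
Local Open Scope group_scope.

Definition wr (gT : finGroupType) (n : nat) : Type :=
  ({ffun 'I_n -> gT} * {perm 'I_n})%type.

(* Paper's product pi pi' is the composition pi o pi' (apply pi' first);
   in MathComp, (pi' * pi)%g x = pi (pi' x). *)
Definition wr_mul (gT : finGroupType) (n : nat) (g h : wr gT n) : wr gT n :=
  let: (f, pi) := g in let: (f', pi') := h in
  ([ffun i => f i * f' ((pi^-1)%g i)], (pi' * pi)%g).

Definition wr_one (gT : finGroupType) (n : nat) : wr gT n := ([ffun=> 1], 1%g).

Fixpoint wr_pow (gT : finGroupType) (n : nat) (h : wr gT n) (r : nat) : wr gT n :=
  if r is r'.+1 then wr_mul h (wr_pow h r') else wr_one gT n.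

Definition is_rth_power (gT : finGroupType) (n : nat) (g : wr gT n) (r : nat) : Prop :=
  exists h : wr gT n, wr_pow h r = g.

Definition cycle_prod (gT : finGroupType) (n : nat) (f : {ffun 'I_n -> gT})
  (pi : {perm 'I_n}) (j : 'I_n) : gT :=
  \prod_(k < #|porbit pi j|) f (((pi^-1) ^+ k)%g j).

Definition orbit_prod (gT : finGroupType) (n : nat) (f : {ffun 'I_n -> gT})
  (pi : {perm 'I_n}) (O : {set 'I_n}) : gT :=
  if [pick x in O] is Some j then cycle_prod f pi j else 1.

Definition wr_type (gT : finGroupType) (n : nat) (g : wr gT n)
  (C : {set gT}) (k : nat) : nat :=
  #|[set O in porbits g.2 | (#|O| == k) && (orbit_prod g.1 g.2 O \in C)]|.

(* If g = h^r, then h commutes with g, so h permutes the cycles of g, preserving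
   their lengths and the classes of their cycle products, while h^r = g fixes
   every cycle.  A cycle of g whose length is divisible by r is never h-stable
   (it would be a cycle of h, which h^r splits into r cycles), so these cycles
   fall into h-orbits of size exactly r.
   Conversely, on a cycle of length L prime to r the power pi^e with
   r e = 1 mod L |G| is an r-th root of pi, and the cycles of length divisible by
   r can be taken r at a time within a type and threaded into one cycle of
   length r L.  Putting a whole cycle product on a single point of each threaded
   cycle gives an r-th power with the permutation of g and conjugate cycle
   products (on the cycles of length prime to r the choice of e makes the
   leftover factor a |G|-th power, hence trivial).  Such an element is conjugate to g by an
   element of the base group G^n, so g is an r-th power too. *)

From mathcomp Require Import all_boot all_fingroup.
From mathcomp Require Import pgroup cyclic sylow.
Set Implicit Arguments. Unset Strict Implicit. Unset Printing Implicit Defensive.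
Local Open Scope group_scope.

Section GroupProducts.
Variable gT : finGroupType.

Lemma prodg_telescope (a b : nat -> gT) m :
  \prod_(k < m) ((a k)^-1 * b k * a k.+1) = (a 0%N)^-1 * (\prod_(k < m) b k) * a m.
Proof.
elim: m => [|m IHm]; first by rewrite !big_ord0 mulg1 mulVg.
by rewrite !big_ord_recr /= IHm !mulgA mulgK.
Qed.

Lemma prodg_blocks (g : nat -> gT) r L :
  \prod_(a < L) \prod_(k < r) g (a * r + k)%N = \prod_(m < L * r) g m.
Proof.
elim: L => [|L IHL]; first by rewrite !big_ord0.
by rewrite big_ord_recr /= IHL mulSnr big_split_ord.
Qed.

Lemma prodg_const (c : gT) N : \prod_(a < N) c = c ^+ N.
Proof. by rewrite big_const_ord; elim: N => //= N ->; rewrite expgS. Qed.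

End GroupProducts.

Section PermOrbits.
Variable T : finType.
Implicit Types (s t : {perm T}) (x y : T).

Lemma card_porbit_gt0 s x : 0 < #|porbit s x|.
Proof. by rewrite lt0n card_porbit_neq0. Qed.

Lemma porbit_fconnect s x : porbit s x =i fconnect s x.
Proof.
move=> y; apply/porbitP/idP => [[i ->]|/iter_findex <-].
  by rewrite permX; apply: fconnect_iter.
by exists (findex s x y); rewrite permX.
Qed.

Lemma card_porbitE s x : #|porbit s x| = fingraph.order s x.
Proof. exact: eq_card (porbit_fconnect s x). Qed.

Lemma permX_modn s x a : (s ^+ (a %% #|porbit s x|)) x = (s ^+ a) x.
Proof.
have fixLq q : (s ^+ (q * #|porbit s x|)) x = x.
  elim: q => [|q IHq]; first by rewrite mul0n expg0 perm1.
  by rewrite mulSn expgD permM [(s ^+ #|_|) x]permX iter_porbit.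
by rewrite {2}(divn_eq a #|porbit s x|) expgD permM fixLq.
Qed.

Lemma permX_fixE s x a : ((s ^+ a) x == x) = (#|porbit s x| %| a).
Proof.
rewrite -permX_modn /dvdn permX; have := ltn_pmod a (card_porbit_gt0 s x).
move: (a %% _) => i; rewrite card_porbitE => lt_i.
apply/eqP/eqP => [fix_i | -> //].
by rewrite -(findex_iter lt_i) fix_i; apply/eqP; rewrite findex_eq0.
Qed.

Lemma porbit_permVX s k x : porbit s ((s^-1 ^+ k) x) = porbit s x.
Proof. by rewrite -porbitV porbit_perm porbitV. Qed.

Lemma porbit_permV s x : porbit s (s^-1 x) = porbit s x.
Proof. by rewrite -(expg1 s^-1) porbit_permVX. Qed.

Lemma porbit_commute s t x : commute t s -> t @: porbit s x = porbit s (t x).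
Proof.
move=> cts; have tsX i y : (s ^+ i) (t y) = t ((s ^+ i) y).
  by rewrite -!permM (commuteX i cts).
apply/setP => y; apply/imsetP/porbitP => [[z /porbitP[i ->] ->]|[i ->]].
  by exists i; rewrite tsX.
by exists ((s ^+ i) x); rewrite ?mem_porbit ?tsX.
Qed.

Lemma card_porbit_commute s t x : commute t s -> #|porbit s (t x)| = #|porbit s x|.
Proof. by move=> cts; rewrite -porbit_commute // card_imset //; apply: perm_inj. Qed.

Lemma findex_permV s x y : fconnect s x y ->
  findex s x (s^-1 y) = if findex s x y is m.+1 then m else #|porbit s x|.-1.
Proof.
move=> xy; have lt_xy := findex_max xy; rewrite card_porbitE.
case def_m: (findex s x y) lt_xy => [|m] lt_m.
  move/eqP: def_m; rewrite findex_eq0 => /eqP <-.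
  have -> : s^-1 x = iter (fingraph.order s x).-1 s x.
    by apply: (@perm_inj _ s); rewrite permKV -iterS prednK ?iter_order //; apply: perm_inj.
  by rewrite findex_iter // ltn_predL.
by rewrite -(iter_findex xy) def_m iterS permK findex_iter // ltnW.
Qed.

Lemma porbit_permX_unstable s r x :
  1 < r -> r %| #|porbit (s ^+ r) x| -> s @: porbit (s ^+ r) x != porbit (s ^+ r) x.
Proof.
move=> r_gt1 r_dvd; apply/negP => /eqP s_stable.
have def_O : porbit (s ^+ r) x = porbit s x.
  apply/eqP; rewrite eqEsubset; apply/andP; split; apply/subsetP => y /porbitP[i ->].
    by rewrite -expgM mem_porbit.
  elim: i => [|i IHi]; first by rewrite perm1 porbit_id.
  by rewrite expgSr permM -s_stable imset_f.
move: r_dvd; rewrite def_O; set k := #|porbit s x| => r_dvd.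
have k_gt0 : 0 < k := card_porbit_gt0 s x.
have : ((s ^+ r) ^+ (k %/ r)) x == x by rewrite -expgM mulnC divnK // permX iter_porbit.
rewrite permX_fixE def_O -/k => /dvdn_leq.
rewrite divn_gt0 ?(ltnW r_gt1) ?(dvdn_leq k_gt0) // leqNgt ltn_Pdiv //.
by move/(_ isT).
Qed.

End PermOrbits.

Lemma prime_dvd_card_fixfree (T : finType) (r : nat) (X : {set T}) (rho : T -> T) :
    prime r -> {in X, forall x, rho x \in X} -> {in X, forall x, iter r rho x = x} ->
    {in X, forall x, rho x != x} ->
  r %| #|X|.
Proof.
move=> pr_r rhoX rho_r rho_fixfree.
pose rho' x := if x \in X then rho x else x.
have rho'X m x : x \in X -> iter m rho' x = iter m rho x /\ iter m rho x \in X.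
  move=> Xx; elim: m => [|m [IHm Xm]] //=.
  by rewrite IHm /rho' Xm rhoX.
have rho'_r x : iter r rho' x = x.
  have [Xx|nXx] := boolP (x \in X); first by have [-> _] := rho'X r x Xx; apply: rho_r.
  by elim: r {pr_r rho_r} => //= m ->; rewrite /rho' (negPf nXx).
have rho'_inj : injective rho'.
  by apply: (can_inj (g := iter r.-1 rho')) => x; rewrite -iterSr prednK ?prime_gt0.
pose t := perm rho'_inj.
have tE x : t x = rho' x by rewrite permE.
have t_r : t ^+ r = 1 by apply/permP => x; rewrite perm1 permX (eq_iter tE) rho'_r.
have r_group : r.-group <[t]>.
  by rewrite /pgroup -orderE (pnat_dvd _ (pnat_id pr_r)) // order_dvdn t_r.
have t_acts : [acts <[t]>, on X | 'P].
  rewrite cycle_subG; apply/astabsP => x /=; rewrite /aperm tE /rho'.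
  by case: (boolP (x \in X)) => Xx; [exact: (rhoX x Xx) | exact/negbTE].
have := pgroup_fix_mod r_group t_acts.
have -> : 'Fix_(X | 'P)(<[t]>) = set0.
  apply/setP => x; rewrite inE in_set0; apply/andP => -[Xx /afixP fix_x].
  by have := fix_x t (cycle_id t); rewrite /= /aperm tE /rho' Xx; apply/eqP/rho_fixfree.
by rewrite cards0 mod0n => /eqP.
Qed.

Section PermProducts.
Variables (T : finType) (gT : finGroupType) (s : {perm T}) (G : T -> gT).

Lemma prod_permV_recl y a :
  \prod_(m < a.+1) G ((s^-1 ^+ m) y) = G y * \prod_(m < a) G ((s^-1 ^+ m) (s^-1 y)).
Proof.
rewrite big_ord_recl expg0 perm1; congr (_ * _); apply: eq_bigr => m _.
by rewrite /bump /= ?add1n expgS permM.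
Qed.

Lemma prod_porbit_single x c :
    c \in porbit s x -> {in porbit s x, forall z, z != c -> G z = 1} ->
  \prod_(m < #|porbit s x|) G ((s^-1 ^+ m) x) = G c.
Proof.
move=> xc G1.
have{}xc : fconnect s^-1 x c by rewrite -[fconnect _ _ _]porbit_fconnect porbitV.
have lt_i : findex s^-1 x c < #|porbit s x|.
  by rewrite -(porbitV s x) card_porbitE findex_max.
transitivity (\prod_(m < #|porbit s x| | m == findex s^-1 x c :> nat) G c).
  rewrite [RHS]big_mkcond; apply: eq_bigr => m _; case: eqP => [-> | ne_mi].
    by rewrite permX iter_findex.
  have lt_m : m < fingraph.order s^-1 x by rewrite -card_porbitE porbitV.
  apply: G1; first by rewrite porbit_sym porbit_permVX porbit_id.
  by apply/eqP => Em; apply: ne_mi; rewrite -Em permX findex_iter.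
by rewrite (big_ord1_eq _ (fun=> G c)) lt_i.
Qed.

End PermProducts.

Section WreathPowers.
Variables (gT : finGroupType) (n : nat).
Implicit Types (f F : {ffun 'I_n -> gT}) (s p : {perm 'I_n}) (h : wr gT n).

Lemma wr_powE f s m :
  wr_pow (f, s) m = ([ffun i => \prod_(k < m) f ((s^-1 ^+ k) i)], s ^+ m).
Proof.
elim: m => [|m IHm] /=.
  by congr (_, _); apply/ffunP => i; rewrite !ffunE big_ord0.
rewrite IHm /= expgSr; congr (_, _); apply/ffunP => i.
by rewrite !ffunE prod_permV_recl.
Qed.

Lemma is_rth_powerP F p r :
  is_rth_power (F, p) r <->
  exists f s, s ^+ r = p /\ forall i, F i = \prod_(k < r) f ((s^-1 ^+ k) i).
Proof.
split=> [[[f s]]|[f [s [<- DF]]]].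
  by rewrite wr_powE => -[<- <-]; exists f, s; split=> // i; rewrite ffunE.
exists (f, s); rewrite wr_powE; congr (_, _).
by apply/ffunP => i; rewrite ffunE DF.
Qed.

Lemma wr_pow_commute h m : wr_mul h (wr_pow h m) = wr_mul (wr_pow h m) h.
Proof.
case: h => f s; rewrite wr_powE /=; congr (_, _); last by rewrite -expgS expgSr.
apply/ffunP => i; rewrite !ffunE -prod_permV_recl big_ord_recr /=.
by rewrite -expVgn.
Qed.

End WreathPowers.

Section CycleProducts.
Variables (gT : finGroupType) (n : nat) (F : {ffun 'I_n -> gT}) (p : {perm 'I_n}).

Lemma cycle_prod_recl x :
  cycle_prod F p x = F x * \prod_(m < #|porbit p x|.-1) F ((p^-1 ^+ m) (p^-1 x)).
Proof.
rewrite /cycle_prod; case: #|porbit p x| (card_porbit_gt0 p x) => // L _.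
exact: prod_permV_recl.
Qed.

Lemma prod_permV_periodic q x :
  \prod_(m < q * #|porbit p x|) F ((p^-1 ^+ m) x) = cycle_prod F p x ^+ q.
Proof.
rewrite -(prodg_blocks (fun m => F ((p^-1 ^+ m) x))) -prodg_const.
apply: eq_bigr => a _; apply: eq_bigr => k _.
rewrite expgD permM; congr (F ((p^-1 ^+ k) _)); apply/eqP.
by rewrite permX_fixE porbitV dvdn_mull.
Qed.

Lemma cycle_prod_permV x : cycle_prod F p (p^-1 x) = cycle_prod F p x ^ F x.
Proof.
rewrite /cycle_prod porbit_permV.
case def_L: #|porbit p x| (card_porbit_gt0 p x) => [//|L] _.
rewrite big_ord_recr /= [in RHS]prod_permV_recl conjgE !mulgA mulVg mul1g.
congr (_ * _).
have := iter_porbit p^-1 x; rewrite porbitV def_L -permX expgS permM.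
by move->.
Qed.

Lemma cycle_prod_class x y :
  y \in porbit p x -> cycle_prod F p y \in cycle_prod F p x ^: [set: gT].
Proof.
rewrite -porbitV => /porbitP[i ->]; elim: i => [|i IHi].
  by rewrite expg0 perm1 class_refl.
rewrite expgSr permM cycle_prod_permV (class_trans _ IHi) //.
by rewrite memJ_class ?inE.
Qed.

Lemma orbit_prod_class x :
  orbit_prod F p (porbit p x) \in cycle_prod F p x ^: [set: gT].
Proof.
rewrite /orbit_prod; case: pickP => [y /cycle_prod_class //|no_pick].
by have := no_pick x; rewrite porbit_id.
Qed.

Lemma cycle_prod_centralizer f s :
  wr_mul (f, s) (F, p) = wr_mul (F, p) (f, s) ->
  forall j, cycle_prod F p j = cycle_prod F p (s j) ^ f (s j).
Proof.
move=> [/ffunP commF /esym csp] j; have {}csp : commute s p by [].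
have sL := card_porbit_commute j csp.
have cV : commute s p^-1 by apply: commuteV.
have spV m y : (p^-1 ^+ m) (s y) = s ((p^-1 ^+ m) y).
  by rewrite -!permM (commuteX m cV).
pose a m : gT := f ((p^-1 ^+ m) (s j)).
rewrite /cycle_prod sL.
transitivity (\prod_(m < #|porbit p j|)
                ((a m)^-1 * F ((p^-1 ^+ m) (s j)) * a m.+1)).
  apply: eq_bigr => m _; have := commF ((p^-1 ^+ m) (s j)).
  by rewrite !ffunE spV permK /a expgSr permM !spV -mulgA => <-; rewrite mulKg.
rewrite (prodg_telescope a (fun m => F ((p^-1 ^+ m) (s j)))) conjgE /a expg0 perm1.
have := iter_porbit p^-1 (s j); rewrite porbitV sL -permX => ->.
by rewrite !mulgA.
Qed.

End CycleProducts.

Lemma rth_power_type_dvd (gT : finGroupType) (n r : nat) (h : wr gT n) C k :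
  prime r -> C \in classes [set: gT] -> r %| k -> r %| wr_type (wr_pow h r) C k.
Proof.
move=> pr_r /imsetP[c _ ->] r_k; case: h => f s.
have := wr_pow_commute (f, s) r; rewrite /wr_type.
case def_g: (wr_pow (f, s) r) => [F p] comm_fs /=.
have def_p : p = s ^+ r by move: def_g; rewrite wr_powE => -[_ <-].
have csp : commute s p by rewrite def_p; apply/commuteX/commute_refl.
have s_porbit j : s @: porbit p j = porbit p (s j) := porbit_commute j csp.
apply: (prime_dvd_card_fixfree (rho := fun O : {set 'I_n} => s @: O) pr_r) => O.
- rewrite !inE => /andP[/imsetP[j _ ->] /andP[/eqP <- cl_j]].
  rewrite s_porbit imset_f ?inE //= card_porbit_commute // eqxx /=.
  have cl_sj : orbit_prod F p (porbit p (s j)) \in orbit_prod F p (porbit p j) ^: [set: gT].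
    apply: class_trans (orbit_prod_class F p (s j)) _.
    apply: (class_trans (y := cycle_prod F p j)).
      by rewrite class_sym (cycle_prod_centralizer comm_fs j) memJ_class ?inE.
    by rewrite class_sym orbit_prod_class.
  by rewrite (class_transl _ cl_sj).
- rewrite inE => /andP[/imsetP[j _ ->] _].
  have iter_s m :
    iter m (fun O : {set 'I_n} => s @: O) (porbit p j) = porbit p ((s ^+ m) j).
    by elim: m => [|m /= ->]; rewrite ?perm1 // s_porbit expgSr permM.
  by rewrite iter_s -def_p -{2}(expg1 p) porbit_perm.
- rewrite !inE => /andP[/imsetP[j _ ->] /andP[/eqP card_j _]].
  by rewrite def_p porbit_permX_unstable ?prime_gt1 // -def_p card_j.
Qed.

Section WreathConjugation.
Variables (gT : finGroupType) (n : nat) (F P : {ffun 'I_n -> gT}) (p : {perm 'I_n}).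

Lemma cycle_prod_class_conj :
    (forall x, cycle_prod F p x \in cycle_prod P p x ^: [set: gT]) ->
  exists t : 'I_n -> gT, forall y, F y = t y * P y * (t (p^-1 y))^-1.
Proof.
move=> classFP; have [u Du] : exists u, forall x, cycle_prod F p x = cycle_prod P p x ^ u x.
  apply: (@fin_all_exists _ (fun=> gT) (fun x v => cycle_prod F p x = _ ^ v)) => x.
  by have /imsetP[v _ ->] := classFP x; exists v.
have sym_p : connect_sym (frel p) := fconnect_sym (@perm_inj _ p).
have root_p y : fconnect p (froot p y) y by rewrite sym_p connect_root.
have froot_permV y : froot p (p^-1 y) = froot p y.
  by apply/(rootP sym_p); rewrite -{2}(permKV p y) fconnect1.
pose path G y : gT := \prod_(m < findex p (froot p y) y) G ((p^-1 ^+ m) y).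
exists (fun y => path F y * (u (froot p y))^-1 * (path P y)^-1) => y.
suff tP : path F y * (u (froot p y))^-1 * (path P y)^-1 * P y =
          F y * (path F (p^-1 y) * (u (froot p y))^-1 * (path P (p^-1 y))^-1).
  by rewrite tP froot_permV mulgK.
have := findex_permV (root_p y); rewrite /path froot_permV.
case def_m: (findex p (froot p y) y) => [|m] ->.
  have y_root : froot p y = y by apply/eqP; rewrite -(findex_eq0 p) def_m.
  rewrite y_root !big_ord0 invg1 !mul1g !mulgA -cycle_prod_recl Du conjgE.
  by rewrite cycle_prod_recl mulg1 !mulgA !mulgK.
by rewrite !prod_permV_recl invMg !mulgA mulgKV.
Qed.

Lemma is_rth_power_conj r (t : 'I_n -> gT) :
    is_rth_power (P, p) r -> (forall y, F y = t y * P y * (t (p^-1 y))^-1) ->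
  is_rth_power (F, p) r.
Proof.
case/is_rth_powerP => f [s [def_p DP]] DF; apply/is_rth_powerP.
exists [ffun i => t i * f i * (t (s^-1 i))^-1], s; split=> // i.
have pV : p^-1 = s^-1 ^+ r by rewrite -def_p expVgn.
rewrite DF DP pV.
have := prodg_telescope (fun k => (t ((s^-1 ^+ k) i))^-1) (fun k => f ((s^-1 ^+ k) i)) r.
rewrite /= expg0 perm1 !invgK => <-.
by apply: eq_bigr => k _; rewrite ffunE expgSr permM invgK.
Qed.

End WreathConjugation.

Section RootConstruction.
Variables (gT : finGroupType) (n r : nat) (F : {ffun 'I_n -> gT}) (p : {perm 'I_n}).
Variable x0 : 'I_n. (* only a default for [pick] in base_point *)
Hypothesis pr_r : prime r.
Hypothesis r_coprime : ~~ (r %| #|[set: gT]|).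
Hypothesis type_dvd : forall C : {set gT}, C \in classes [set: gT] ->
  forall k : nat, 0 < k <= n -> r %| k -> r %| wr_type (F, p) C k.

Local Notation len y := #|porbit p y|.

Let r_gt0 : 0 < r. Proof. exact: prime_gt0. Qed.

Definition orbit_class y := orbit_prod F p (porbit p y) ^: [set: gT].

Definition twin_orbits y :=
  [set O in porbits p | (#|O| == len y) && (orbit_prod F p O \in orbit_class y)].

Definition twin_seq y := enum (twin_orbits y).

Definition twin_index y := index (porbit p y) (twin_seq y).

(* The twin orbits of y are enumerated and cut into consecutive blocks of r
   orbits O_0, ..., O_(r-1).  With base points b_i, a block is threaded into one
   cycle of the root, whose N-th point is p^(N / r) b_(N mod r). *)
Definition block_start y := (twin_index y %/ r * r)%N.

Definition base_point (O : {set 'I_n}) := odflt x0 [pick z in O].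

Definition block_point y N :=
  (p ^+ (N %/ r)) (base_point (nth set0 (twin_seq y) (block_start y + N %% r))).

Definition block_pos y := (findex p (base_point (porbit p y)) y * r + twin_index y %% r)%N.

Lemma porbit_base_point O : O \in porbits p -> porbit p (base_point O) = O.
Proof.
case/imsetP => z _ ->; apply/eqP; rewrite eq_porbit_mem /base_point.
by case: pickP => [//|no_pick]; have := no_pick z; rewrite porbit_id.
Qed.

Lemma twin_orbitsP y O :
  reflect [/\ O \in porbits p, #|O| = len y & orbit_prod F p O \in orbit_class y]
          (O \in twin_orbits y).
Proof. by rewrite inE; apply: (iffP and3P) => -[-> /eqP -> ->]. Qed.

Section Block.
Variable y : 'I_n.
Hypothesis r_len : r %| len y.

Lemma porbit_twin : porbit p y \in twin_orbits y.
Proof. by apply/twin_orbitsP; rewrite imset_f ?inE // /orbit_class class_refl. Qed.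

Lemma block_start_bound : block_start y + r <= size (twin_seq y).
Proof.
have r_size : r %| size (twin_seq y).
  rewrite -cardE; apply: type_dvd => //; first by rewrite mem_classes ?inE.
  by rewrite card_porbit_gt0 (leq_trans (max_card _)) ?card_ord.
rewrite /block_start -mulSnr -(divnK r_size) leq_mul2r ltn_divLR //.
by rewrite divnK // index_mem mem_enum porbit_twin orbT.
Qed.

Lemma block_twin N : nth set0 (twin_seq y) (block_start y + N %% r) \in twin_orbits y.
Proof.
rewrite -mem_enum; apply/mem_nth/(leq_trans _ block_start_bound).
by rewrite ltn_add2l ltn_mod.
Qed.

Lemma porbit_block_point N :
  porbit p (block_point y N) = nth set0 (twin_seq y) (block_start y + N %% r).
Proof.
have /twin_orbitsP[orbit_N _ _] := block_twin N.
by rewrite porbit_perm porbit_base_point.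
Qed.

Lemma twin_orbits_block_point N : twin_orbits (block_point y N) = twin_orbits y.
Proof.
have /twin_orbitsP[_ len_N /class_eqP cl_N] := block_twin N.
by rewrite /twin_orbits /orbit_class porbit_block_point len_N cl_N.
Qed.

Lemma twin_index_block_point N : twin_index (block_point y N) = block_start y + N %% r.
Proof.
rewrite /twin_index /twin_seq twin_orbits_block_point porbit_block_point.
by rewrite index_uniq ?enum_uniq // (leq_trans _ block_start_bound) // ltn_add2l ltn_mod.
Qed.

Lemma block_point_idem N M : block_point (block_point y N) M = block_point y M.
Proof.
rewrite /block_point {1}/twin_seq twin_orbits_block_point /block_start.
by rewrite twin_index_block_point divnMDl // (@divn_small (N %% r)) ?addn0 ?ltn_mod.
Qed.

Lemma len_block_point N : len (block_point y N) = len y.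
Proof. by have /twin_orbitsP[_ <- _] := block_twin N; rewrite porbit_block_point. Qed.

Lemma block_pointD N m : block_point y (N + m * r)%N = (p ^+ m) (block_point y N).
Proof. by rewrite /block_point (addnC N) divnMDl // modnMDl (addnC m) expgD permM. Qed.

Lemma block_point_modn N : block_point y (N %% (len y * r)) = block_point y N.
Proof.
rewrite {2}(divn_eq N (len y * r)) mulnA addnC block_pointD.
by apply/esym/eqP; rewrite permX_fixE len_block_point dvdn_mull.
Qed.

Lemma block_pos_point N : block_pos (block_point y N) = N %% (len y * r).
Proof.
have /twin_orbitsP[orbit_N len_N _] := block_twin N.
rewrite /block_pos twin_index_block_point /block_start modnMDl modn_mod.
rewrite porbit_block_point /block_point -permX_modn porbit_base_point // len_N permX.
rewrite findex_iter -?card_porbitE ?porbit_base_point ?len_N ?ltn_mod ?card_porbit_gt0 //.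
by rewrite modn_divl -(@modn_dvdm (len y * r) N r (dvdn_mull _ (dvdnn r))) -divn_eq.
Qed.

Lemma block_point_pos : block_point y (block_pos y) = y.
Proof.
rewrite /block_point /block_pos divnMDl // divn_small ?ltn_mod // addn0 modnMDl modn_mod.
rewrite /block_start -divn_eq /twin_index nth_index ?mem_enum ?porbit_twin //.
have /twin_orbitsP[orbit_y _ _] := porbit_twin.
rewrite permX iter_findex // -[fconnect _ _ _]porbit_fconnect.
by rewrite porbit_base_point ?porbit_id.
Qed.

Lemma block_point_eqE N M :
  (block_point y N == block_point y M) = (N == M %[mod len y * r]).
Proof.
apply/eqP/eqP => [E | E]; first by rewrite -!block_pos_point E.
by rewrite -block_point_modn E block_point_modn.
Qed.

End Block.

Definition root_exp L := (r ^ (totient (L * #|[set: gT]|)).-1)%N.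

Lemma root_expP L :
  0 < L -> ~~ (r %| L) -> (r * root_exp L = 1 %[mod L * #|[set: gT]|])%N.
Proof.
move=> L_gt0 r_L; have G_gt0 : 0 < #|[set: gT]| by rewrite (cardD1 1) inE.
rewrite -expnS prednK ?totient_gt0 ?muln_gt0 ?L_gt0 //.
by rewrite Euler_exp_totient // coprimeMr !prime_coprime // r_L.
Qed.

Definition root_step y :=
  if r %| len y then block_point y (block_pos y).+1 else (p ^+ root_exp (len y)) y.

Lemma iter_root_step_block y N m :
  r %| len y -> iter m root_step (block_point y N) = block_point y (N + m).
Proof.
move=> r_len; elim: m => [|m /= ->]; first by rewrite addn0.
rewrite /root_step len_block_point // r_len block_point_idem // block_pos_point //.
rewrite -block_point_modn // -[RHS]block_point_modn //.
by rewrite addnS -[(_ %% _).+1]addn1 modnDml addn1.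
Qed.

Lemma iter_root_step_coprime y m :
  ~~ (r %| len y) -> iter m root_step y = (p ^+ (root_exp (len y) * m)) y.
Proof.
move=> r_len; elim: m => [|m /= ->]; first by rewrite muln0 perm1.
by rewrite /root_step porbit_perm (negPf r_len) -permM -expgD mulnS addnC.
Qed.

Lemma iter_root_step y : iter r root_step y = p y.
Proof.
have [r_len | r_len] := boolP (r %| len y).
  rewrite -{1}(block_point_pos y) iter_root_step_block // -(mul1n r).
  by rewrite block_pointD // expg1 block_point_pos.
have r_exp : (r * root_exp (len y) = 1 %[mod len y])%N.
  have dvd_len := dvdn_mulr #|[set: gT]| (dvdnn (len y)).
  by rewrite -(modn_dvdm _ dvd_len) root_expP ?card_porbit_gt0 // modn_dvdm.
by rewrite iter_root_step_coprime // -permX_modn mulnC r_exp permX_modn expg1.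
Qed.

Lemma root_step_inj : injective root_step.
Proof.
move=> y z E; apply: (@perm_inj _ p); rewrite -!iter_root_step.
by rewrite -(prednK r_gt0) !iterSr E.
Qed.

Definition root_perm := perm root_step_inj.

Lemma root_permX y m : (root_perm ^+ m) y = iter m root_step y.
Proof. by rewrite permX; apply: eq_iter => z; rewrite permE. Qed.

Lemma root_perm_expr : root_perm ^+ r = p.
Proof. by apply/permP => y; rewrite root_permX iter_root_step. Qed.

Lemma root_permVX_coprime y m :
  ~~ (r %| len y) -> (root_perm^-1 ^+ m) y = (p^-1 ^+ (root_exp (len y) * m)) y.
Proof.
move=> r_len; set z := (p^-1 ^+ _) y.
have <- : (root_perm ^+ m) z = y.
  by rewrite root_permX iter_root_step_coprime /z porbit_permVX // expVgn permKV.
by rewrite expVgn permK.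
Qed.

Lemma card_porbit_root y : r %| len y -> #|porbit root_perm y| = (len y * r)%N.
Proof.
move=> r_len; have fixE m : (#|porbit root_perm y| %| m) = (len y * r %| m).
  rewrite -permX_fixE root_permX -{1 2}(block_point_pos y).
  rewrite iter_root_step_block // block_point_eqE //.
  by rewrite -{2}[block_pos y]addn0 eqn_modDl mod0n.
by apply/eqP; rewrite eqn_dvd fixE dvdnn -fixE dvdnn.
Qed.

(* On a threaded block the whole cycle product sits at the starting point; on an
   orbit of length prime to r, root_exp is chosen so that the r-th power gives
   back F exactly. *)
Definition root_fun := [ffun y =>
  if r %| len y then (if y == block_point y 0 then cycle_prod F p y else 1)
  else \prod_(j < root_exp (len y)) F ((p^-1 ^+ j) y)].

Definition root_pow := [ffun y => \prod_(k < r) root_fun ((root_perm^-1 ^+ k) y)].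

Lemma root_pow_is_rth_power : is_rth_power (root_pow, p) r.
Proof.
apply/is_rth_powerP; exists root_fun, root_perm.
by split=> [|i]; rewrite ?root_perm_expr ?ffunE.
Qed.

Lemma cycle_prod_root_pow x :
  cycle_prod root_pow p x = \prod_(m < len x * r) root_fun ((root_perm^-1 ^+ m) x).
Proof.
have pV : p^-1 = root_perm^-1 ^+ r by rewrite expVgn root_perm_expr.
rewrite /cycle_prod -(prodg_blocks (fun m => root_fun ((root_perm^-1 ^+ m) x))).
apply: eq_bigr => a _; rewrite ffunE.
by apply: eq_bigr => k _; rewrite pV -expgM -permM -expgD mulnC.
Qed.

Lemma root_pow_coprime z : ~~ (r %| len z) -> root_pow z = F z.
Proof.
move=> r_len; rewrite ffunE.
transitivity (\prod_(m < r * root_exp (len z)) F ((p^-1 ^+ m) z)).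
  rewrite -(prodg_blocks (fun m => F ((p^-1 ^+ m) z))); apply: eq_bigr => k _.
  rewrite ffunE root_permVX_coprime // porbit_permVX (negPf r_len).
  by apply: eq_bigr => j _; rewrite -permM -expgD mulnC.
have G_gt0 : 0 < #|[set: gT]| by rewrite (cardD1 1) inE.
set M := (len z * #|[set: gT]|)%N.
have re_gt0 : 0 < r * root_exp (len z) by rewrite muln_gt0 r_gt0 expn_gt0 r_gt0.
have M_dvd : M %| (r * root_exp (len z)).-1.
  by rewrite -subn1 -eqn_mod_dvd // eq_sym root_expP ?card_porbit_gt0.
rewrite -(prednK re_gt0) -(divnK M_dvd) /M (mulnC (len z)) mulnA prod_permV_recl.
rewrite -(porbit_permV p z) prod_permV_periodic mulnC expgM.
by rewrite (expg_cardG (G := [set: gT]%G)) ?inE // expg1n mulg1.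
Qed.

Lemma cycle_prod_root_pow_coprime x :
  ~~ (r %| len x) -> cycle_prod root_pow p x = cycle_prod F p x.
Proof.
move=> r_len; apply: eq_bigr => m _.
by rewrite root_pow_coprime // porbit_permVX.
Qed.

Lemma cycle_prod_root_pow_block x :
  r %| len x -> cycle_prod root_pow p x = cycle_prod F p (block_point x 0).
Proof.
move=> r_len; have root_point i : (root_perm ^+ i) x = block_point x (block_pos x + i).
  by rewrite root_permX -iter_root_step_block // block_point_pos.
rewrite cycle_prod_root_pow -card_porbit_root //.
rewrite (prod_porbit_single (c := block_point x 0)).
- by rewrite ffunE len_block_point // r_len block_point_idem // eqxx.
- rewrite porbit_sym; apply/porbitP; exists (block_pos x).
  by rewrite root_permX iter_root_step_block // add0n block_point_pos.
move=> _ /porbitP[i ->]; rewrite root_point ffunE len_block_point // r_len.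
by rewrite block_point_idem // => /negPf ->.
Qed.

Lemma cycle_prod_root_pow_class x :
  cycle_prod F p x \in cycle_prod root_pow p x ^: [set: gT].
Proof.
have [r_len|r_len] := boolP (r %| len x); last first.
  by rewrite cycle_prod_root_pow_coprime // class_refl.
rewrite cycle_prod_root_pow_block //; set c := block_point x 0.
have := block_twin r_len 0; rewrite -porbit_block_point // => /twin_orbitsP[_ _ cl_c].
apply: (class_trans (y := orbit_prod F p (porbit p x))).
  by rewrite class_sym orbit_prod_class.
apply: (class_trans (y := orbit_prod F p (porbit p c))); last exact: orbit_prod_class.
by rewrite class_sym.
Qed.

Lemma type_dvd_is_rth_power : is_rth_power (F, p) r.
Proof.
have [t Dt] := cycle_prod_class_conj cycle_prod_root_pow_class.
exact: is_rth_power_conj root_pow_is_rth_power Dt.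
Qed.

End RootConstruction.

Theorem corollary4p4 (gT : finGroupType) (n r : nat) (g : wr gT n) :
  prime r -> ~~ (r %| #|[set: gT]|) ->
  (is_rth_power g r <->
   (forall C : {set gT}, C \in classes [set: gT] ->
      forall k : nat, 0 < k <= n -> r %| k -> r %| wr_type g C k)).
Proof.
move=> pr_r r_coprime; split=> [[h <-] C C_class k _|].
  exact: rth_power_type_dvd.
case: n g => [|n] [F p] type_dvd.
  by apply/is_rth_powerP; exists F, p; split=> [|[]//]; apply/permP => -[].
exact: (type_dvd_is_rth_power ord0 pr_r r_coprime type_dvd).
Qed.
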